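(* Let $\mathcal T=\boxtimes ABCD$ be a tetrahedron and $O\in\operatorname{int}\mathcal T$. (1) $(\mathcal T,O)$ has a stable equilibrium on the face $\triangle ABC$ if and only if the dihedral angles between $\triangle ABC$ and each of $\triangle ABO$, $\triangle AOC$, $\triangle OBC$ (i.e. the dihedral angles of the tetrahedron $\boxtimes ABCO$ along the edges $\overline{AB},\overline{AC},\overline{BC}$) are all acute. (2) $(\mathcal T,O')$ has a stable equilibrium on $\triangle ABC$ for every $O'\in\operatorname{int}\mathcal T$ if and only if none of the dihedral angles between $\triangle ABC$ and each of $\triangle ABD$, $\triangle ADC$, $\triangle DBC$ is obtuse. (3) Let $\mathcal S_A$ be a small sphere centred at $A$ and let $P,Q,\Omega$ be the intersections of $\mathcal S_A$ with the segments $\overline{AB},\overline{AC},\overline{AO}$ respectively; define analogously points on a small sphere $\mathcal S_B$ centred at $B$ (intersections with $\overline{BA},\overline{BC},\overline{BO}$). If the dihedral angle between $\triangle ABC$ and $\triangle ABO$ is obtuse, then the spherical angle $\angle QP\Omega$ on $\mathcal S_A$ is obtuse, and so is the corresponding spherical angle on $\mathcal S_B$ (at the point on $\overline{BA}$, between the arcs towards the points on $\overline{BC}$ and $\overline{BO}$).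
   Context: For a convex polyhedron $\mathcal P$ and $O\in\operatorname{int}\mathcal P$, $(\mathcal P,O)$ is in (stable) equilibrium on a face $F$ if there exists $Q$ in the relative interior of $F$ such that the plane perpendicular to $[O,Q]$ at $Q$ supports $\mathcal P$. *)

From HB Require Import structures.
From mathcomp Require Import all_boot all_order all_algebra.
From mathcomp Require Import all_classical all_reals all_analysis.
Set Implicit Arguments. Unset Strict Implicit. Unset Printing Implicit Defensive.
Import Order.TTheory GRing.Theory Num.Theory.
Import numFieldNormedType.Exports.
Local Open Scope classical_set_scope.
Local Open Scope ring_scope.

Section Geometry.
Variable R : realType.
Notation vec := 'rV[R]_3.

Definition dotv (u v : vec) : R := \sum_(i < 3) u 0 i * v 0 i.
Definition enorm (u : vec) : R := Num.sqrt (dotv u u).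

Definition vec_angle (u v : vec) : R := acos (dotv u v / (enorm u * enorm v)).

Definition perp (e u : vec) : vec := u - (dotv u e / dotv e e) *: e.

(* dihedral angle along the edge [A,B] between the half-planes (triangles)
   ABX and ABY: angle between the components of X-A and Y-A orthogonal to AB *)
Definition dihedral (A B X Y : vec) : R :=
  vec_angle (perp (B - A) (X - A)) (perp (B - A) (Y - A)).

Definition acute (t : R) : Prop := t < pi / 2.
Definition obtuse (t : R) : Prop := pi / 2 < t.

(* spherical angle at the point P of a sphere centred at A between the great
   circle arcs from P to Q and from P to W: angle between the tangent vectors
   at P of these arcs *)
Definition spherical_angle (A P Q W : vec) : R :=
  vec_angle (perp (P - A) (Q - A)) (perp (P - A) (W - A)).

Definition on_seg (X Y P : vec) : Prop :=
  exists t : R, 0 <= t <= 1 /\ P = (1 - t) *: X + t *: Y.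

Definition tetra (A B C D : vec) : set vec :=
  [set X | exists a b c d : R, [/\ 0 <= a, 0 <= b, 0 <= c & 0 <= d] /\
      a + b + c + d = 1 /\ X = a *: A + b *: B + c *: C + d *: D].

Definition triangle (A B C : vec) : set vec :=
  [set X | exists a b c : R, [/\ 0 <= a, 0 <= b & 0 <= c] /\
      a + b + c = 1 /\ X = a *: A + b *: B + c *: C].
Definition aff3 (A B C : vec) : set vec :=
  [set X | exists a b c : R, a + b + c = 1 /\ X = a *: A + b *: B + c *: C].

Definition rel_interior (L S : set vec) : set vec :=
  [set X | S X /\ exists e : R, 0 < e /\
     forall Y, L Y -> `|Y - X| < e -> S Y].

Definition mx3 (u v w : vec) : 'M[R]_3 :=
  \matrix_(i < 3, j < 3) (if val i == 0%N then u 0 j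
                          else if val i == 1%N then v 0 j else w 0 j).
Definition noncoplanar (A B C D : vec) : Prop :=
  \det (mx3 (B - A) (C - A) (D - A)) != 0.

(* the plane through Q perpendicular to [O,Q] supports the body K *)
Definition supports_perp (K : set vec) (O Q : vec) : Prop :=
  Q != O /\ K Q /\
  ((forall X, K X -> dotv (X - Q) (Q - O) <= 0) \/
   (forall X, K X -> 0 <= dotv (X - Q) (Q - O))).

Definition equilibrium_on (K F L : set vec) (O : vec) : Prop :=
  exists Q, rel_interior L F Q /\ supports_perp K O Q.

End Geometry.

From HB Require Import structures.
From mathcomp Require Import all_boot all_order all_algebra.
From mathcomp Require Import all_classical all_reals all_analysis.
From mathcomp Require Import ring lra.
Set Implicit Arguments.
Unset Strict Implicit.
Unset Printing Implicit Defensive.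

Import Order.TTheory GRing.Theory Num.Theory.
Import numFieldNormedType.Exports.
Local Open Scope classical_set_scope.
Local Open Scope ring_scope.

(* Write h_A, h_B, h_C for edge_height B C A, edge_height A C B and edge_height A B C:
   the height of a point over an edge of the face ABC, measured in the plane ABC towards
   the opposite vertex and scaled by the squared length of the edge.  The dihedral angle
   along that edge between ABC and the half-plane through X is acute or obtuse according
   to the sign of h(X).  On the plane ABC the heights are N times the barycentric
   coordinates, where N = h_C(C) is four times the squared area, and they only depend on
   the orthogonal projection onto that plane.  Hence (T, O) is in equilibrium on ABC iff
   the foot of the perpendicular from O, with barycentric coordinates h(O) / N, lies in
   the open triangle, i.e. iff the three dihedral angles at O are acute.  The heights are
   affine, so an interior point aA + bB + cC + dD has h_C = c N + d h_C(D), which is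
   positive for all positive weights iff h_C(D) >= 0; this gives (2).  For (3), the
   spherical angle at P is the angle between the components of AC and AO orthogonal to
   AB, that is the dihedral angle along AB, and it does not change when the points move
   along their rays from A. *)

Section TetrahedronEquilibrium.
Variable R : realType.
Notation vec := 'rV[R]_3.
Implicit Types (u v w x y z e k m n A B C D O P Q X Y Z : vec).

(** * Coordinates and the dot product *)

Lemma dotvE u v : dotv u v = u 0 0 * v 0 0 + u 0 1 * v 0 1 + u 0 2%:R * v 0 2%:R.
Proof.
rewrite /dotv !big_ord_recr big_ord0 /= add0r.
by congr (_ + _ + _); congr (_ * _); congr (_ _ _); apply/val_inj.
Qed.

Lemma row3P x y : x 0 0 = y 0 0 -> x 0 1 = y 0 1 -> x 0 2%:R = y 0 2%:R -> x = y.
Proof.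
move=> h0 h1 h2; apply/rowP => -[[|[|[|k]]] lt_k3] //.
- by rewrite (_ : Ordinal lt_k3 = 0) //; apply: val_inj.
- by rewrite (_ : Ordinal lt_k3 = 1) //; apply: val_inj.
- by rewrite (_ : Ordinal lt_k3 = 2%:R) //; apply: val_inj.
Qed.

Definition crossv u v : vec := \row_(j < 3)
  (if val j == 0%N then u 0 1 * v 0 2%:R - u 0 2%:R * v 0 1
   else if val j == 1%N then u 0 2%:R * v 0 0 - u 0 0 * v 0 2%:R
   else u 0 0 * v 0 1 - u 0 1 * v 0 0).

Ltac coord := rewrite ?dotvE ?mxE /=.
Ltac vcoord := apply: row3P; coord.

Lemma det_mx3 u v w : \det (mx3 u v w) = dotv w (crossv u v).
Proof.
rewrite (expand_det_row _ 0) !big_ord_recr big_ord0 /= add0r.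
rewrite /cofactor !(expand_det_row _ 0) !big_ord_recr big_ord0 /= !add0r.
rewrite /cofactor !det_mx11 !big_ord0 dotvE !mxE /=.
pose c (z : vec) (k : nat) := z 0 (inord k).
have cE (z : vec) (i : 'I_3) : z 0 i = c z (val i) by rewrite /c inord_val.
by rewrite !(cE u) !(cE v) !(cE w) /=; ring.
Qed.

Lemma dotvC u v : dotv u v = dotv v u.
Proof. by coord; ring. Qed.

Lemma dotvDl u v w : dotv (u + v) w = dotv u w + dotv v w.
Proof. by coord; ring. Qed.

Lemma dotvBl u v w : dotv (u - v) w = dotv u w - dotv v w.
Proof. by coord; ring. Qed.

Lemma dotvBr u v w : dotv w (u - v) = dotv w u - dotv w v.
Proof. by coord; ring. Qed.

Lemma dotvZl a u w : dotv (a *: u) w = a * dotv u w.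
Proof. by coord; ring. Qed.

Lemma dotvZr a u w : dotv w (a *: u) = a * dotv w u.
Proof. by coord; ring. Qed.

Lemma dotvNr u w : dotv w (- u) = - dotv w u.
Proof. by coord; ring. Qed.

Lemma dotv0r u : dotv u 0 = 0.
Proof. by coord; ring. Qed.

Lemma dotv_ge0 u : 0 <= dotv u u.
Proof. by coord; nra. Qed.

Lemma dotv_gt0 u : u != 0 -> 0 < dotv u u.
Proof.
move=> u_neq0; rewrite lt_def dotv_ge0 andbT; apply: contra u_neq0 => /eqP.
rewrite dotvE => sq0; apply/eqP/row3P; rewrite mxE; apply/eqP; rewrite -sqrf_eq0;
  apply/eqP; nra.
Qed.

Lemma dotv_sqr_le u v : dotv u v ^+ 2 <= dotv u u * dotv v v.
Proof.
coord; rewrite -subr_ge0.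
set a0 := u 0 0; set a1 := u 0 1; set a2 := u 0 2%:R.
set b0 := v 0 0; set b1 := v 0 1; set b2 := v 0 2%:R.
have -> : (a0 * a0 + a1 * a1 + a2 * a2) * (b0 * b0 + b1 * b1 + b2 * b2) -
  (a0 * b0 + a1 * b1 + a2 * b2) ^+ 2 =
  (a0 * b1 - a1 * b0) ^+ 2 + (a0 * b2 - a2 * b0) ^+ 2 + (a1 * b2 - a2 * b1) ^+ 2
  by ring.
by rewrite !addr_ge0 ?sqr_ge0.
Qed.

Lemma dotvBB P Y Z k : dotv (Y - Z) k = dotv (Y - P) k - dotv (Z - P) k.
Proof. by rewrite -dotvBl opprB addrA subrK. Qed.

Lemma dotv_comb3 P k A B C a b c : a + b + c = 1 ->
  dotv (a *: A + b *: B + c *: C - P) k =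
  a * dotv (A - P) k + b * dotv (B - P) k + c * dotv (C - P) k.
Proof.
move=> abc1; have -> : a = 1 - b - c by lra.
by coord; ring.
Qed.

Lemma dotv_comb4 P k A B C D a b c d : a + b + c + d = 1 ->
  dotv (a *: A + b *: B + c *: C + d *: D - P) k =
  a * dotv (A - P) k + b * dotv (B - P) k + c * dotv (C - P) k + d * dotv (D - P) k.
Proof.
move=> abcd1; have -> : a = 1 - b - c - d by lra.
by coord; ring.
Qed.

(** * Angles *)

Lemma acos_lt_pihalf (r : R) : -1 <= r <= 1 -> (acos r < pi / 2 <-> 0 < r).
Proof.
move=> r_bnd; have pi_gt0 := pi_gt0 R.
have pihalf_itv : pi / 2 \in `[0, (pi : R)] by rewrite in_itv /=; apply/andP; split; lra.
have acos_itv : acos r \in `[0, (pi : R)] by rewrite in_itv /= acos_ge0 // acos_lepi.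
by rewrite -(ltr_cos acos_itv pihalf_itv) acosK ?in_itv // cos_pihalf.
Qed.

Lemma pihalf_lt_acos (r : R) : -1 <= r <= 1 -> (pi / 2 < acos r <-> r < 0).
Proof.
move=> r_bnd; have pi_gt0 := pi_gt0 R.
have pihalf_itv : pi / 2 \in `[0, (pi : R)] by rewrite in_itv /=; apply/andP; split; lra.
have acos_itv : acos r \in `[0, (pi : R)] by rewrite in_itv /= acos_ge0 // acos_lepi.
by rewrite -(ltr_cos pihalf_itv acos_itv) acosK ?in_itv // cos_pihalf.
Qed.

Lemma dotv_le_enorm u v : `|dotv u v| <= enorm u * enorm v.
Proof.
rewrite /enorm -sqrtrM ?dotv_ge0 // -sqrtr_sqr ler_sqrt ?mulr_ge0 ?dotv_ge0 //.
exact: dotv_sqr_le.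
Qed.

(* A zero vector gives the junk angle acos (0 / 0) = acos 0 = pi / 2. *)
Lemma vec_angle_cases u v :
  (enorm u * enorm v = 0 /\ dotv u v = 0 /\ vec_angle u v = pi / 2) \/
  (0 < enorm u * enorm v /\ -1 <= dotv u v / (enorm u * enorm v) <= 1).
Proof.
have := dotv_le_enorm u v; rewrite /vec_angle.
have : 0 <= enorm u * enorm v by rewrite mulr_ge0 ?sqrtr_ge0.
rewrite le_eqVlt => /orP[/eqP <- | N_gt0] dN.
  have d0 : dotv u v = 0 by apply/normr0_eq0/le_anti; rewrite dN normr_ge0.
  by left; rewrite d0 mul0r acos0.
right; split => //.
by rewrite -ler_norml normf_div (gtr0_norm N_gt0) ler_pdivrMr // mul1r.
Qed.

Lemma acute_vec_angle u v : acute (vec_angle u v) <-> 0 < dotv u v.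
Proof.
rewrite /acute; case: (vec_angle_cases u v) => [[_ [-> ->]] | [N_gt0 bnd]].
  by rewrite !ltxx.
by rewrite /vec_angle acos_lt_pihalf // ltr_pdivlMr // mul0r.
Qed.

Lemma obtuse_vec_angle u v : obtuse (vec_angle u v) <-> dotv u v < 0.
Proof.
rewrite /obtuse; case: (vec_angle_cases u v) => [[_ [-> ->]] | [N_gt0 bnd]].
  by rewrite !ltxx.
by rewrite /vec_angle pihalf_lt_acos // ltr_pdivrMr // mul0r.
Qed.

Lemma enormZ a u : 0 <= a -> enorm (a *: u) = a * enorm u.
Proof.
move=> a_ge0; rewrite /enorm dotvZl dotvZr mulrA sqrtrM ?mulr_ge0 //.
by rewrite -expr2 sqrtr_sqr ger0_norm.
Qed.

Lemma vec_angleZ a b u v : 0 < a -> 0 < b -> vec_angle (a *: u) (b *: v) = vec_angle u v.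
Proof.
move=> a_gt0 b_gt0; rewrite /vec_angle dotvZl dotvZr !enormZ ?ltW //.
by rewrite mulrACA mulrA invfM mulrACA mulfV ?mul1r // mulf_neq0 ?gt_eqF.
Qed.

Lemma perp_dot e x y : dotv e e != 0 ->
  dotv e e * dotv (perp e x) (perp e y) = dotv y (dotv e e *: x - dotv x e *: e).
Proof.
move=> ee_neq0; rewrite /perp !(dotvBl, dotvBr, dotvZl, dotvZr) (dotvC x y) (dotvC e y).
by field.
Qed.

Lemma perpZ (t s : R) e x : t != 0 -> perp (t *: e) (s *: x) = s *: perp e x.
Proof.
move=> t_neq0; rewrite /perp !(dotvZl, dotvZr) scalerBr !scalerA; congr (_ - _ *: _).
have [->|ee_neq0] := eqVneq (dotv e e) 0; first by rewrite !(mulr0, invr0, mul0r).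
by field; rewrite ee_neq0 t_neq0.
Qed.

(* dotv (Q - P) (Q - P) *: perp (Q - P) (Y - P), scaled to avoid the division. *)
Definition edge_normal P Q Y : vec :=
  dotv (Q - P) (Q - P) *: (Y - P) - dotv (Y - P) (Q - P) *: (Q - P).

Definition edge_height P Q Y X : R := dotv (X - P) (edge_normal P Q Y).

Lemma dotv_sub_gt0 P Q : P != Q -> 0 < dotv (Q - P) (Q - P).
Proof. by move=> PQ; rewrite dotv_gt0 // subr_eq0 eq_sym. Qed.

Lemma acute_dihedral P Q Y X :
  P != Q -> acute (dihedral P Q Y X) <-> 0 < edge_height P Q Y X.
Proof.
move=> /dotv_sub_gt0 ee_gt0.
by rewrite /dihedral acute_vec_angle -(pmulr_rgt0 _ ee_gt0) perp_dot ?gt_eqF.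
Qed.

Lemma obtuse_dihedral P Q Y X :
  P != Q -> obtuse (dihedral P Q Y X) <-> edge_height P Q Y X < 0.
Proof.
move=> /dotv_sub_gt0 ee_gt0.
by rewrite /dihedral obtuse_vec_angle -(pmulr_rlt0 _ ee_gt0) perp_dot ?gt_eqF.
Qed.

Lemma not_obtuse_dihedral P Q Y X :
  P != Q -> ~ obtuse (dihedral P Q Y X) <-> 0 <= edge_height P Q Y X.
Proof. by move=> PQ; rewrite obtuse_dihedral // leNgt; split => [/negP | /negP]. Qed.

Lemma perpB e x : dotv e e != 0 -> perp e (x - e) = perp e x.
Proof.
by move=> ee_neq0; rewrite /perp dotvBl mulrBl divff // scalerBl scale1r opprB addrA subrK.
Qed.

Lemma dihedral_sym P Q Y X : P != Q -> dihedral Q P Y X = dihedral P Q Y X.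
Proof.
move=> /dotv_sub_gt0; rewrite lt0r => /andP[ee_neq0 _].
have perp_sym Z : perp (P - Q) (Z - Q) = perp (Q - P) (Z - P).
  rewrite -[P - Q]opprB -scaleN1r -[Z - Q]scale1r perpZ ?oppr_eq0 ?oner_eq0 // scale1r.
  by rewrite -(perpB (Z - P) ee_neq0) opprB addrA subrK.
by rewrite /dihedral !perp_sym.
Qed.

Lemma dihedral_scale P Q Y X Q' Y' X' (t s q : R) :
  0 < t -> 0 < s -> 0 < q ->
  Q' - P = t *: (Q - P) -> Y' - P = s *: (Y - P) -> X' - P = q *: (X - P) ->
  dihedral P Q' Y' X' = dihedral P Q Y X.
Proof.
move=> t_gt0 s_gt0 q_gt0 eQ eY eX.
by rewrite /dihedral eQ eY eX -[Q - P]scale1r !perpZ ?gt_eqF // vec_angleZ.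
Qed.

(** * Interiors and supporting planes *)

Lemma near_dotv_gt0 P k O : 0 < dotv (O - P) k -> \forall X \near O, 0 < dotv (X - P) k.
Proof.
move=> pos.
suff cvgf : (fun X : vec => dotv (X - P) k) @ O --> dotv (O - P) k.
  exact: cvgr_gt cvgf _ pos.
have cvg_coord i : (fun X : vec => k 0 i * (X - P) 0 i) @ O --> k 0 i * (O - P) 0 i.
  apply: (@cvgMr _ _ (nbhs O)).
  apply: (@continuous_cvg _ _ _ _ _ (fun X : vec => X - P) (fun M : vec => M 0 i)).
    exact: coord_continuous.
  by apply: cvgB; [exact: cvg_id | exact: cvg_cst].
under eq_fun do rewrite dotvE ![_ * k _ _]mulrC.
rewrite dotvE ![_ * k _ _]mulrC.
by apply: (@cvgD _ _ _ (nbhs O)); [apply: (@cvgD _ _ _ (nbhs O))|]; apply: cvg_coord.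
Qed.

Lemma interior_rel_interior K O : interior K O -> rel_interior setT K O.
Proof.
move=> /[dup] /nbhs_singleton KO /nbhs_normP [e e_gt0 ballK].
split=> //; exists e; split=> // Y _ YO; apply: ballK.
by rewrite /ball_ /= distrC.
Qed.

Lemma rel_interior_near L K O :
  K O -> (\forall X \near O, L X -> K X) -> rel_interior L K O.
Proof.
move=> KO /nbhs_normP [e e_gt0 ballK]; split=> //; exists e; split=> // Y LY YO.
by apply: ballK LY; rewrite /ball_ /= distrC.
Qed.

Lemma rel_interior_shift L K O m : rel_interior L K O -> (forall t, L (O + t *: m)) ->
  exists2 t : R, 0 < t & K (O + t *: m) /\ K (O - t *: m).
Proof.
move=> [_ [e [e_gt0 ballK]]] Lm.
have m1_gt0 : 0 < `|m| + 1 by rewrite ltr_wpDl.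
have t_gt0 : 0 < e / (`|m| + 1) by rewrite divr_gt0.
have small : `|e / (`|m| + 1) *: m| < e.
  rewrite normrZ gtr0_norm // mulrAC ltr_pdivrMr // ltr_pM2l //.
  by rewrite ltrDl.
exists (e / (`|m| + 1)) => //; split; apply: ballK.
- exact: Lm.
- by rewrite addrAC subrr add0r.
- by rewrite -scaleNr; exact: Lm.
- by rewrite addrAC subrr add0r normrN.
Qed.

Lemma rel_interior_dotv_gt0 L K O P k m :
  rel_interior L K O -> (forall t, L (O + t *: m)) -> dotv m k < 0 ->
  (forall X, K X -> 0 <= dotv (X - P) k) -> 0 < dotv (O - P) k.
Proof.
move=> relO Lm mk_lt0 K_ge0; have [t t_gt0 [Kplus _]] := rel_interior_shift relO Lm.
have := K_ge0 _ Kplus; rewrite addrAC [dotv (O - P + _) _]dotvDl dotvZl.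
have : t * dotv m k < 0 by rewrite pmulr_rlt0.
lra.
Qed.

Lemma interior_dotv_gt0 K O P k : interior K O -> k != 0 ->
  (forall X, K X -> 0 <= dotv (X - P) k) -> 0 < dotv (O - P) k.
Proof.
move=> /interior_rel_interior relO k_neq0.
apply: (rel_interior_dotv_gt0 (m := - k) relO) => //.
by rewrite dotvC dotvNr oppr_lt0 dotv_gt0.
Qed.

Lemma supports_perp_orth K O Q m (t : R) : supports_perp K O Q -> 0 < t ->
  K (Q + t *: m) -> K (Q - t *: m) -> dotv m (Q - O) = 0.
Proof.
move=> [_ [_ supp]] t_gt0 Kplus Kminus.
have shiftE s : dotv (Q + s *: m - Q) (Q - O) = s * dotv m (Q - O).
  by rewrite addrAC subrr add0r dotvZl.
have := shiftE (- t); rewrite scaleNr => shift_minus.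
case: supp => supp; move: (supp _ Kplus) (supp _ Kminus); rewrite shiftE shift_minus; nra.
Qed.

(** * Barycentric coordinates in the tetrahedron *)

Definition signed_vol P Q Y X : R := dotv (X - P) (crossv (Q - P) (Y - P)).

Lemma noncoplanarE A B C D : noncoplanar A B C D = (signed_vol A B C D != 0).
Proof. by rewrite /noncoplanar det_mx3. Qed.

Lemma signed_vol_tetra A B C D X (a b c d : R) :
  a + b + c + d = 1 -> X = a *: A + b *: B + c *: C + d *: D ->
  [/\ signed_vol B D C X = a * signed_vol A B C D,
      signed_vol A C D X = b * signed_vol A B C D,
      signed_vol A D B X = c * signed_vol A B C D &
      signed_vol A B C X = d * signed_vol A B C D].
Proof.
move=> abcd1 ->; have -> : a = 1 - b - c - d by lra.
by rewrite /signed_vol; split; coord; ring.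
Qed.

Lemma signed_vol_aff3 A B C X : aff3 A B C X -> signed_vol A B C X = 0.
Proof.
case=> a [b [c [abc1 ->]]]; have -> : a = 1 - b - c by lra.
by rewrite /signed_vol; coord; ring.
Qed.

Lemma signed_vol_sum A B C D X : signed_vol B D C X + signed_vol A C D X +
  signed_vol A D B X + signed_vol A B C X = signed_vol A B C D.
Proof. by rewrite /signed_vol; coord; ring. Qed.

Lemma signed_vol_vertices A B C D : [/\ signed_vol B D C A = signed_vol A B C D,
  signed_vol A C D B = signed_vol A B C D & signed_vol A D B C = signed_vol A B C D].
Proof. by rewrite /signed_vol; split; coord; ring. Qed.

Lemma crossv_cramer u v w z : dotv w (crossv u v) *: z =
  dotv z (crossv v w) *: u + dotv z (crossv w u) *: v + dotv z (crossv u v) *: w.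
Proof. by vcoord; ring. Qed.

Lemma signed_vol_decomp A B C D X : signed_vol A B C D != 0 ->
  X = (signed_vol B D C X / signed_vol A B C D) *: A +
      (signed_vol A C D X / signed_vol A B C D) *: B +
      (signed_vol A D B X / signed_vol A B C D) *: C +
      (signed_vol A B C X / signed_vol A B C D) *: D.
Proof.
have := crossv_cramer (B - A) (C - A) (D - A) (X - A).
rewrite -/(signed_vol A C D X) -/(signed_vol A D B X) -/(signed_vol A B C X).
rewrite -/(signed_vol A B C D) -(signed_vol_sum A B C D X).
move: (signed_vol B D C X) (signed_vol A C D X) (signed_vol A D B X) (signed_vol A B C X).
move=> a b c d cramer sum_neq0; apply: (scalerI sum_neq0).
rewrite !scalerDr !scalerA !(mulrC (a + b + c + d)) !divfK //.
by rewrite -[X in _ *: X](subrK A) scalerDr cramer; vcoord; ring.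
Qed.

Lemma tetra_of_signed_vol A B C D X : signed_vol A B C D != 0 ->
  0 <= signed_vol A B C D * signed_vol B D C X ->
  0 <= signed_vol A B C D * signed_vol A C D X ->
  0 <= signed_vol A B C D * signed_vol A D B X ->
  0 <= signed_vol A B C D * signed_vol A B C X -> tetra A B C D X.
Proof.
set V := signed_vol A B C D => V_neq0 volA volB volC volD.
have coordE (W : R) : W / V = (V * W) / (V * V) by field.
exists (signed_vol B D C X / V), (signed_vol A C D X / V),
  (signed_vol A D B X / V), (signed_vol A B C X / V).
split; first by split; rewrite coordE divr_ge0 // -expr2 sqr_ge0.
split; last exact: signed_vol_decomp.
by rewrite -!mulrDl signed_vol_sum divff.
Qed.

Lemma tetra_signed_vol_ge0 A B C D X : tetra A B C D X ->
  [/\ 0 <= signed_vol A B C D * signed_vol B D C X,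
      0 <= signed_vol A B C D * signed_vol A C D X,
      0 <= signed_vol A B C D * signed_vol A D B X &
      0 <= signed_vol A B C D * signed_vol A B C X].
Proof.
case=> a [b [c [d [[a_ge0 b_ge0 c_ge0 d_ge0] [abcd1 Xdef]]]]].
have [-> -> -> ->] := signed_vol_tetra abcd1 Xdef.
by split; rewrite mulrCA mulr_ge0 // -expr2 sqr_ge0.
Qed.

Lemma interior_signed_vol_gt0 K P Q Y W X (s : R) : interior K X ->
  s != 0 -> signed_vol P Q Y W != 0 ->
  (forall Z, K Z -> 0 <= s * signed_vol P Q Y Z) -> 0 < s * signed_vol P Q Y X.
Proof.
move=> intX s_neq0 volW_neq0 K_ge0.
have k_neq0 : s *: crossv (Q - P) (Y - P) != 0.
  rewrite scaler_eq0 negb_or s_neq0 /=; apply: contra_neq volW_neq0 => cross0.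
  by rewrite /signed_vol cross0 dotv0r.
rewrite /signed_vol -dotvZr; apply: interior_dotv_gt0 intX k_neq0 _ => Z /K_ge0.
by rewrite dotvZr.
Qed.

Lemma interior_tetra_coords A B C D X : noncoplanar A B C D ->
  interior (tetra A B C D) X ->
  exists a b c d : R, [/\ 0 < a, 0 < b, 0 < c & 0 < d] /\
    a + b + c + d = 1 /\ X = a *: A + b *: B + c *: C + d *: D.
Proof.
rewrite noncoplanarE; set V := signed_vol A B C D => V_neq0 intX.
have V2_gt0 : 0 < V * V by rewrite -expr2 exprn_even_gt0.
have coord_gt0 P Q Y W (l : R) : signed_vol P Q Y W = V -> signed_vol P Q Y X = l * V ->
    (forall Z, tetra A B C D Z -> 0 <= V * signed_vol P Q Y Z) -> 0 < l.
  move=> volW volX K_ge0; have volW_neq0 : signed_vol P Q Y W != 0 by rewrite volW.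
  have := interior_signed_vol_gt0 intX V_neq0 volW_neq0 K_ge0.
  by rewrite volX mulrCA pmulr_lgt0.
have [a [b [c [d [_ [abcd1 Xdef]]]]]] := nbhs_singleton intX.
have [volA volB volC volD] := signed_vol_tetra abcd1 Xdef.
have [vertA vertB vertC] := signed_vol_vertices A B C D.
exists a, b, c, d; split=> //; split.
- by apply: coord_gt0 vertA volA _ => Z /tetra_signed_vol_ge0[].
- by apply: coord_gt0 vertB volB _ => Z /tetra_signed_vol_ge0[].
- by apply: coord_gt0 vertC volC _ => Z /tetra_signed_vol_ge0[].
- by apply: (coord_gt0 A B C D _ erefl volD) => Z /tetra_signed_vol_ge0[].
Qed.

Lemma coords_interior_tetra A B C D X (a b c d : R) : noncoplanar A B C D ->
  [/\ 0 < a, 0 < b, 0 < c & 0 < d] -> a + b + c + d = 1 ->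
  X = a *: A + b *: B + c *: C + d *: D -> interior (tetra A B C D) X.
Proof.
rewrite noncoplanarE; set V := signed_vol A B C D => V_neq0 coords_gt0 abcd1 Xdef.
have V2_gt0 : 0 < V * V by rewrite -expr2 exprn_even_gt0.
have [volA volB volC volD] := signed_vol_tetra abcd1 Xdef.
have near_ge0 P Q Y (l : R) : 0 < l -> signed_vol P Q Y X = l * V ->
    \forall Z \near X, 0 <= V * signed_vol P Q Y Z.
  move=> l_gt0 volX.
  apply: filterS (near_dotv_gt0 (P := P) (k := V *: crossv (Q - P) (Y - P)) _).
    by move=> Z; rewrite dotvZr => /ltW.
  by rewrite dotvZr -/(signed_vol P Q Y X) volX mulrCA mulr_gt0.
case: coords_gt0 => a_gt0 b_gt0 c_gt0 d_gt0.
near=> Z; apply: tetra_of_signed_vol => //; near: Z.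
- exact: near_ge0 volA.
- exact: near_ge0 volB.
- exact: near_ge0 volC.
- exact: near_ge0 volD.
Unshelve. all: by end_near.
Qed.

(** * Heights over the edges of the face ABC *)

Lemma edge_heights_tetra A B C D X (a b c d : R) :
  a + b + c + d = 1 -> X = a *: A + b *: B + c *: C + d *: D ->
  [/\ edge_height B C A X = a * edge_height A B C C + d * edge_height B C A D,
      edge_height A C B X = b * edge_height A B C C + d * edge_height A C B D &
      edge_height A B C X = c * edge_height A B C C + d * edge_height A B C D].
Proof.
move=> abcd1 ->; have -> : a = 1 - b - c - d by lra.
by rewrite /edge_height /edge_normal; split; coord; ring.
Qed.

Lemma edge_heights_triangle A B C X (a b c : R) :
  a + b + c = 1 -> X = a *: A + b *: B + c *: C ->
  [/\ edge_height B C A X = a * edge_height A B C C,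
      edge_height A C B X = b * edge_height A B C C &
      edge_height A B C X = c * edge_height A B C C].
Proof.
move=> abc1 Xdef; have abc01 : a + b + c + 0 = 1 by rewrite addr0.
have Xdef' : X = a *: A + b *: B + c *: C + 0 *: A by rewrite scale0r addr0.
by have [-> -> ->] := edge_heights_tetra abc01 Xdef'; rewrite !mul0r !addr0.
Qed.

Lemma edge_height_sum A B C X :
  edge_height B C A X + edge_height A C B X + edge_height A B C X = edge_height A B C C.
Proof. by rewrite /edge_height /edge_normal; coord; ring. Qed.

Lemma noncoplanar_area_gt0 A B C D : noncoplanar A B C D -> 0 < edge_height A B C C.
Proof.
rewrite noncoplanarE => vol_neq0.
have -> : edge_height A B C C =
    dotv (crossv (B - A) (C - A)) (crossv (B - A) (C - A)).
  by rewrite /edge_height /edge_normal; coord; ring.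
by apply: dotv_gt0; apply: contra_neq vol_neq0 => cross0; rewrite /signed_vol cross0 dotv0r.
Qed.

Lemma triangle_edges_neq A B C : 0 < edge_height A B C C ->
  [/\ A != B, A != C & B != C].
Proof.
move=> area_gt0; split; apply: contraTneq area_gt0 => ->.
all: rewrite -leNgt (_ : edge_height _ _ _ _ = 0) //.
all: by rewrite /edge_height /edge_normal; coord; ring.
Qed.

Lemma triangle_aff3 A B C X : triangle A B C X -> aff3 A B C X.
Proof. by case=> a [b [c [_ abcX]]]; exists a, b, c. Qed.

Lemma triangle_tetra A B C D X : triangle A B C X -> tetra A B C D X.
Proof.
case=> a [b [c [[a_ge0 b_ge0 c_ge0] [abc1 ->]]]].
by exists a, b, c, 0; rewrite scale0r !addr0.
Qed.

Lemma aff3_vertices A B C : [/\ aff3 A B C A, aff3 A B C B & aff3 A B C C].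
Proof.
split; [exists 1, 0, 0 | exists 0, 1, 0 | exists 0, 0, 1];
  by rewrite !scale0r !scale1r ?addr0 ?add0r.
Qed.

Lemma aff3_shift A B C X Y Z (t : R) : aff3 A B C X -> aff3 A B C Y -> aff3 A B C Z ->
  aff3 A B C (X + t *: (Y - Z)).
Proof.
move=> [a [b [c [abc1 ->]]]] [a' [b' [c' [abc1' ->]]]] [a'' [b'' [c'' [abc1'' ->]]]].
exists (a + t * (a' - a'')), (b + t * (b' - b'')), (c + t * (c' - c'')); split.
  have -> : a + t * (a' - a'') + (b + t * (b' - b'')) + (c + t * (c' - c'')) =
    (a + b + c) + t * ((a' + b' + c') - (a'' + b'' + c'')) by ring.
  by rewrite abc1 abc1' abc1'' subrr mulr0 addr0.
by vcoord; ring.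
Qed.

Lemma triangle_edge_heights_ge0 A B C X : 0 < edge_height A B C C ->
  triangle A B C X ->
  [/\ 0 <= edge_height B C A X, 0 <= edge_height A C B X & 0 <= edge_height A B C X].
Proof.
move=> area_gt0 [a [b [c [[a_ge0 b_ge0 c_ge0] [abc1 Xdef]]]]].
have [-> -> ->] := edge_heights_triangle abc1 Xdef.
by split; rewrite mulr_ge0 // ltW.
Qed.

Lemma triangle_of_edge_heights A B C X : 0 < edge_height A B C C -> aff3 A B C X ->
  0 <= edge_height B C A X -> 0 <= edge_height A C B X -> 0 <= edge_height A B C X ->
  triangle A B C X.
Proof.
move=> area_gt0 [a [b [c [abc1 Xdef]]]].
have [-> -> ->] := edge_heights_triangle abc1 Xdef.
rewrite !pmulr_lge0 // => a_ge0 b_ge0 c_ge0.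
by exists a, b, c.
Qed.

Lemma rel_interior_triangle_edge_heights A B C Q : 0 < edge_height A B C C ->
  rel_interior (aff3 A B C) (triangle A B C) Q ->
  [/\ 0 < edge_height B C A Q, 0 < edge_height A C B Q & 0 < edge_height A B C Q].
Proof.
move=> area_gt0 relQ; have [affA affB affC] := aff3_vertices A B C.
have affQ := triangle_aff3 relQ.1.
have ge0 := triangle_edge_heights_ge0 area_gt0.
have pos P k Y Z : aff3 A B C Y -> aff3 A B C Z -> dotv (Y - Z) k = - edge_height A B C C ->
    (forall X, triangle A B C X -> 0 <= dotv (X - P) k) -> 0 < dotv (Q - P) k.
  move=> affY affZ dirE.
  apply: rel_interior_dotv_gt0 relQ (fun t => aff3_shift t affQ affY affZ) _.
  by rewrite dirE oppr_lt0.
split.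
- apply: (pos _ _ _ _ affB affA) => [|X /ge0[? ? ?] //].
  by rewrite /edge_height /edge_normal; coord; ring.
- apply: (pos _ _ _ _ affA affB) => [|X /ge0[? ? ?] //].
  by rewrite /edge_height /edge_normal; coord; ring.
- apply: (pos _ _ _ _ affA affC) => [|X /ge0[? ? ?] //].
  by rewrite /edge_height /edge_normal; coord; ring.
Qed.

Lemma dotv_edge_normal P Q Y n : dotv n (edge_normal P Q Y) =
  dotv (Q - P) (Q - P) * dotv (Y - P) n - dotv (Y - P) (Q - P) * dotv (Q - P) n.
Proof. by rewrite /edge_normal; coord; ring. Qed.

Lemma edge_height_diff P Q Y X X' :
  edge_height P Q Y X - edge_height P Q Y X' = dotv (X - X') (edge_normal P Q Y).
Proof. by rewrite /edge_height -dotvBl opprB addrA subrK. Qed.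

Lemma edge_heights_eq A B C X X' :
  dotv (B - A) (X - X') = 0 -> dotv (C - A) (X - X') = 0 ->
  [/\ edge_height B C A X = edge_height B C A X',
      edge_height A C B X = edge_height A C B X' &
      edge_height A B C X = edge_height A B C X'].
Proof.
move=> orthB orthC.
have height_eq P Q Y : dotv (Q - P) (X - X') = 0 -> dotv (Y - P) (X - X') = 0 ->
    edge_height P Q Y X = edge_height P Q Y X'.
  move=> orthQ orthY; apply/eqP; rewrite -subr_eq0 edge_height_diff.
  by rewrite dotv_edge_normal orthQ orthY !mulr0 subrr.
have orthCB : dotv (C - B) (X - X') = 0 by rewrite (dotvBB A) orthB orthC subrr.
have orthAB : dotv (A - B) (X - X') = 0 by rewrite -opprB dotvC dotvNr dotvC orthB oppr0.
by split; apply: height_eq.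
Qed.

Lemma orth_of_edge_heights A B C X X' : 0 < edge_height A B C C ->
  edge_height A C B X = edge_height A C B X' -> edge_height A B C X = edge_height A B C X' ->
  dotv (B - A) (X - X') = 0 /\ dotv (C - A) (X - X') = 0.
Proof.
move=> area_gt0 eqB eqC.
have := edge_height_diff A C B X X'; have := edge_height_diff A B C X X'.
rewrite eqB eqC !subrr !dotv_edge_normal.
move: area_gt0; rewrite /edge_height dotv_edge_normal (dotvC (C - A) (B - A)).
set uu := dotv (B - A) (B - A); set vv := dotv (C - A) (C - A).
set uv := dotv (B - A) (C - A); set un := dotv (B - A) (X - X').
set vn := dotv (C - A) (X - X') => area_gt0 eqC0 eqB0.
have un0 : (uu * vv - uv * uv) * un = uu * (vv * un - uv * vn) + uv * (uu * vn - uv * un).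
  by ring.
have vn0 : (uu * vv - uv * uv) * vn = vv * (uu * vn - uv * un) + uv * (vv * un - uv * vn).
  by ring.
rewrite -eqB0 -eqC0 !mulr0 addr0 in un0 vn0.
by move/eqP: un0; move/eqP: vn0; rewrite !mulf_eq0 gt_eqF //= => /eqP -> /eqP ->.
Qed.

(* The foot of the perpendicular from X to the plane ABC. *)
Definition face_foot A B C X : vec := (edge_height A B C C)^-1 *:
  (edge_height B C A X *: A + edge_height A C B X *: B + edge_height A B C X *: C).

Lemma face_foot_spec A B C X : 0 < edge_height A B C C ->
  [/\ aff3 A B C (face_foot A B C X),
      edge_height B C A (face_foot A B C X) = edge_height B C A X,
      edge_height A C B (face_foot A B C X) = edge_height A C B X &
      edge_height A B C (face_foot A B C X) = edge_height A B C X].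
Proof.
move=> area_gt0; set N := edge_height A B C C.
have sum1 : edge_height B C A X / N + edge_height A C B X / N + edge_height A B C X / N = 1.
  by rewrite -!mulrDl edge_height_sum divff ?gt_eqF.
have footE : face_foot A B C X = (edge_height B C A X / N) *: A +
    (edge_height A C B X / N) *: B + (edge_height A B C X / N) *: C.
  by rewrite /face_foot !scalerDr !scalerA !(mulrC N^-1).
have [-> -> ->] := edge_heights_triangle sum1 footE.
split; first by rewrite footE; exists (edge_height B C A X / N),
  (edge_height A C B X / N), (edge_height A B C X / N).
all: by rewrite divfK ?gt_eqF.
Qed.

Lemma supports_face_orth A B C D O Q :
  rel_interior (aff3 A B C) (triangle A B C) Q -> supports_perp (tetra A B C D) O Q ->
  dotv (B - A) (Q - O) = 0 /\ dotv (C - A) (Q - O) = 0.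
Proof.
move=> relQ suppQ; have [affA affB affC] := aff3_vertices A B C.
have affQ := triangle_aff3 relQ.1.
have orth Y Z : aff3 A B C Y -> aff3 A B C Z -> dotv (Y - Z) (Q - O) = 0.
  move=> affY affZ.
  have [t t_gt0 [Kp Km]] := rel_interior_shift relQ (fun t => aff3_shift t affQ affY affZ).
  exact: supports_perp_orth suppQ t_gt0 (triangle_tetra D Kp) (triangle_tetra D Km).
by split; apply: orth.
Qed.

Lemma tetra_dotv_face_orth A B C D Q X n : aff3 A B C Q ->
  dotv (B - A) n = 0 -> dotv (C - A) n = 0 -> tetra A B C D X ->
  exists2 d : R, 0 <= d & dotv (X - Q) n = d * dotv (D - A) n.
Proof.
move=> [a' [b' [c' [abc1' ->]]]] orthB orthC [a [b [c [d [[_ _ _ d_ge0] [abcd1 ->]]]]]].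
exists d => //; rewrite (dotvBB A) dotv_comb4 // dotv_comb3 // orthB orthC subrr.
by rewrite dotvC dotv0r !(mulr0, add0r, subr0).
Qed.

Lemma interior_not_aff3 A B C D O : noncoplanar A B C D ->
  interior (tetra A B C D) O -> ~ aff3 A B C O.
Proof.
move=> ncop /(interior_tetra_coords ncop) [a [b [c [d [[_ _ _ d_gt0] [abcd1 Odef]]]]]].
move=> /signed_vol_aff3; have [_ _ _ ->] := signed_vol_tetra abcd1 Odef.
by move/eqP; rewrite mulf_eq0 (gt_eqF d_gt0) /=; apply/negP; rewrite -noncoplanarE.
Qed.

(** * Equilibria on the face ABC *)

Lemma equilibrium_edge_heights_gt0 A B C D O : noncoplanar A B C D ->
  equilibrium_on (tetra A B C D) (triangle A B C) (aff3 A B C) O ->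
  [/\ 0 < edge_height B C A O, 0 < edge_height A C B O & 0 < edge_height A B C O].
Proof.
move=> ncop [Q [relQ suppQ]].
have [orthB orthC] := supports_face_orth relQ suppQ.
have [<- <- <-] := edge_heights_eq orthB orthC.
exact: rel_interior_triangle_edge_heights (noncoplanar_area_gt0 ncop) relQ.
Qed.

Lemma edge_heights_gt0_equilibrium A B C D O : noncoplanar A B C D ->
  interior (tetra A B C D) O ->
  0 < edge_height B C A O -> 0 < edge_height A C B O -> 0 < edge_height A B C O ->
  equilibrium_on (tetra A B C D) (triangle A B C) (aff3 A B C) O.
Proof.
move=> ncop intO hA_gt0 hB_gt0 hC_gt0; have area_gt0 := noncoplanar_area_gt0 ncop.
set Q := face_foot A B C O.
have [affQ hAQ hBQ hCQ] := face_foot_spec O area_gt0.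
have [orthB orthC] := orth_of_edge_heights area_gt0 hBQ hCQ.
have triQ : triangle A B C Q.
  by apply: triangle_of_edge_heights; rewrite ?hAQ ?hBQ ?hCQ ?ltW.
exists Q; split.
  apply: rel_interior_near triQ _; near=> Y => affY.
  apply: triangle_of_edge_heights => //; apply: ltW; near: Y; apply: near_dotv_gt0.
  - by move: hA_gt0; rewrite -hAQ.
  - by move: hB_gt0; rewrite -hBQ.
  - by move: hC_gt0; rewrite -hCQ.
split; first by apply/eqP => QO; apply: (interior_not_aff3 ncop intO); rewrite -QO.
split; first exact: triangle_tetra.
have [w_ge0 | w_lt0] := leP 0 (dotv (D - A) (Q - O)); [right | left];
  move=> X /(tetra_dotv_face_orth affQ orthB orthC) [d d_ge0 ->].
- exact: mulr_ge0.
- by rewrite mulr_ge0_le0 // ltW.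
Unshelve. all: by end_near.
Qed.

Lemma equilibrium_face_iff A B C D O : noncoplanar A B C D ->
  interior (tetra A B C D) O ->
  equilibrium_on (tetra A B C D) (triangle A B C) (aff3 A B C) O <->
  [/\ 0 < edge_height B C A O, 0 < edge_height A C B O & 0 < edge_height A B C O].
Proof.
move=> ncop intO; split; first exact: equilibrium_edge_heights_gt0.
by case; exact: edge_heights_gt0_equilibrium.
Qed.

Lemma ge0_of_comb_gt0 (N y : R) : 0 < N ->
  (forall c d : R, 0 < c -> 0 < d -> c + d < 1 -> 0 < c * N + d * y) -> 0 <= y.
Proof.
move=> N_gt0 pos; rewrite leNgt; apply/negP => y_lt0.
(* With d = 1/2 and c = min (1/4) (-y / 4N) we get c N + d y <= y / 4 < 0. *)
set c := Num.min (1 / 4) (- y / (4 * N)).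
have c_gt0 : 0 < c.
  by rewrite lt_min; apply/andP; split; [lra | rewrite divr_gt0 ?mulr_gt0; lra].
have c_le : c <= 1 / 4 by rewrite ge_min lexx.
have cN_le : c * N <= - y / 4.
  rewrite -ler_pdivlMr // -mulrA (mulrC 4^-1) -invfM (mulrC N).
  by rewrite ge_min lexx orbT.
have := pos c (1 / 2) c_gt0 ltac:(lra) ltac:(lra).
lra.
Qed.

Lemma equilibrium_everywhere_iff A B C D : noncoplanar A B C D ->
  (forall O, interior (tetra A B C D) O ->
     equilibrium_on (tetra A B C D) (triangle A B C) (aff3 A B C) O) <->
  [/\ 0 <= edge_height B C A D, 0 <= edge_height A C B D & 0 <= edge_height A B C D].
Proof.
move=> ncop; have area_gt0 := noncoplanar_area_gt0 ncop.
set N := edge_height A B C C.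
split=> [eq_all | [hA_ge0 hB_ge0 hC_ge0] O intO].
  have heights_gt0 (a b c d : R) : [/\ 0 < a, 0 < b, 0 < c & 0 < d] ->
      a + b + c + d = 1 ->
      [/\ 0 < a * N + d * edge_height B C A D, 0 < b * N + d * edge_height A C B D &
          0 < c * N + d * edge_height A B C D].
    move=> coords_gt0 abcd1.
    have intO : interior (tetra A B C D) (a *: A + b *: B + c *: C + d *: D).
      exact: coords_interior_tetra ncop coords_gt0 abcd1 erefl.
    have [<- <- <-] := edge_heights_tetra (A := A) (B := B) (C := C) (D := D) abcd1 erefl.
    exact: equilibrium_edge_heights_gt0 ncop (eq_all _ intO).
  split; apply: ge0_of_comb_gt0 area_gt0 _ => c d c_gt0 d_gt0 cd_lt1;
    have a_gt0 : 0 < (1 - c - d) / 2 by lra.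
  - by have [] := heights_gt0 c _ _ d (And4 c_gt0 a_gt0 a_gt0 d_gt0) ltac:(lra).
  - by have [] := heights_gt0 _ c _ d (And4 a_gt0 c_gt0 a_gt0 d_gt0) ltac:(lra).
  - by have [] := heights_gt0 _ _ c d (And4 a_gt0 a_gt0 c_gt0 d_gt0) ltac:(lra).
have [a [b [c [d [[a_gt0 b_gt0 c_gt0 d_gt0] [abcd1 Odef]]]]]] :=
  interior_tetra_coords ncop intO.
have [hA hB hC] := edge_heights_tetra abcd1 Odef.
apply: edge_heights_gt0_equilibrium => //; rewrite ?hA ?hB ?hC.
all: by rewrite ltr_pwDl ?mulr_ge0 ?mulr_gt0 // ltW.
Qed.

Lemma face_dihedrals_acute A B C X : 0 < edge_height A B C C ->
  [/\ acute (dihedral A B C X), acute (dihedral A C B X) & acute (dihedral B C A X)] <->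
  [/\ 0 < edge_height B C A X, 0 < edge_height A C B X & 0 < edge_height A B C X].
Proof.
move=> /triangle_edges_neq [AB AC BC].
split=> -[? ? ?]; split.
- by apply/(acute_dihedral _ _ BC).
- by apply/(acute_dihedral _ _ AC).
- by apply/(acute_dihedral _ _ AB).
- by apply/(acute_dihedral _ _ AB).
- by apply/(acute_dihedral _ _ AC).
- by apply/(acute_dihedral _ _ BC).
Qed.

Lemma face_dihedrals_not_obtuse A B C X : 0 < edge_height A B C C ->
  [/\ ~ obtuse (dihedral A B C X), ~ obtuse (dihedral A C B X)
    & ~ obtuse (dihedral B C A X)] <->
  [/\ 0 <= edge_height B C A X, 0 <= edge_height A C B X & 0 <= edge_height A B C X].
Proof.
move=> /triangle_edges_neq [AB AC BC].
split=> -[? ? ?]; split.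
- by apply/(not_obtuse_dihedral _ _ BC).
- by apply/(not_obtuse_dihedral _ _ AC).
- by apply/(not_obtuse_dihedral _ _ AB).
- by apply/(not_obtuse_dihedral _ _ AB).
- by apply/(not_obtuse_dihedral _ _ AC).
- by apply/(not_obtuse_dihedral _ _ BC).
Qed.

Lemma on_seg_ray X Y P (r : R) : 0 < r -> on_seg X Y P -> enorm (P - X) = r ->
  exists2 t : R, 0 < t & P - X = t *: (Y - X).
Proof.
move=> r_gt0 [t [/andP[t_ge0 _] ->]] PXr.
have PX : (1 - t) *: X + t *: Y - X = t *: (Y - X) by vcoord; ring.
exists t; last exact: PX.
rewrite lt_def t_ge0 andbT; apply/eqP => t0; move: PXr.
by rewrite PX t0 scale0r /enorm dotv0r sqrtr0 => r0; move: r_gt0; rewrite -r0 ltxx.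
Qed.

Lemma spherical_angle_dihedral A B C O P Q W (r : R) : 0 < r ->
  on_seg A B P -> on_seg A C Q -> on_seg A O W ->
  enorm (P - A) = r -> enorm (Q - A) = r -> enorm (W - A) = r ->
  spherical_angle A P Q W = dihedral A B C O.
Proof.
move=> r_gt0 onP onQ onW PA QA WA.
have [t t_gt0 Pdef] := on_seg_ray r_gt0 onP PA.
have [s s_gt0 Qdef] := on_seg_ray r_gt0 onQ QA.
have [q q_gt0 Wdef] := on_seg_ray r_gt0 onW WA.
(* spherical_angle A P Q W unfolds to dihedral A P Q W. *)
exact: dihedral_scale t_gt0 s_gt0 q_gt0 Pdef Qdef Wdef.
Qed.

End TetrahedronEquilibrium.

Theorem lemma1p5 (R : realType) (A B C D O : 'rV[R]_3) :
  noncoplanar A B C D ->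
  interior (tetra A B C D) O ->
  (* (1) *)
  (equilibrium_on (tetra A B C D) (triangle A B C) (aff3 A B C) O <->
     [/\ acute (dihedral A B C O), acute (dihedral A C B O)
       & acute (dihedral B C A O)]) /\
  (* (2) *)
  ((forall O', interior (tetra A B C D) O' ->
       equilibrium_on (tetra A B C D) (triangle A B C) (aff3 A B C) O') <->
     [/\ ~ obtuse (dihedral A B C D), ~ obtuse (dihedral A C B D)
       & ~ obtuse (dihedral B C A D)]) /\
  (* (3) *)
  (obtuse (dihedral A B C O) ->
     forall r : R, 0 < r ->
     (forall P Q W, on_seg A B P -> on_seg A C Q -> on_seg A O W ->
        enorm (P - A) = r -> enorm (Q - A) = r -> enorm (W - A) = r ->
        obtuse (spherical_angle A P Q W)) /\
     (forall P Q W, on_seg B A P -> on_seg B C Q -> on_seg B O W ->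
        enorm (P - B) = r -> enorm (Q - B) = r -> enorm (W - B) = r ->
        obtuse (spherical_angle B P Q W))).
Proof.
move=> ncop intO; have area_gt0 := noncoplanar_area_gt0 ncop.
have [AB _ _] := triangle_edges_neq area_gt0.
split; first by rewrite equilibrium_face_iff // face_dihedrals_acute.
split; first by rewrite equilibrium_everywhere_iff // face_dihedrals_not_obtuse.
move=> obtuse_AB r r_gt0; split=> P Q W onP onQ onW PA QA WA.
- by rewrite (spherical_angle_dihedral r_gt0 onP onQ onW PA QA WA).
- by rewrite (spherical_angle_dihedral r_gt0 onP onQ onW PA QA WA) dihedral_sym.
Qed.
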